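(* $\mathrm{FO}(\perp\!\!\!\perp)\not\le\mathrm{ESO}_{\mathbb R}[\le,+,0,1]$; that is, there is a formula $\phi\in\mathrm{FO}(\perp\!\!\!\perp)$ (for instance $\phi(x)=\exists c\,\exists y\,\forall z\,(\mathrm{dep}(c)\wedge x\perp\!\!\!\perp y\wedge x\approx y\wedge((x=c\wedge y=c)\leftrightarrow z=c))$, where $\mathrm{dep}(c)$ and $x\approx y$ are expressible in $\mathrm{FO}(\perp\!\!\!\perp)$) such that no formula $\psi$ of $\mathrm{ESO}_{\mathbb R}[\le,+,0,1]$ satisfies $\mathrm{Struc}_{d[0,1]}(\phi)=\mathrm{Struc}_{d[0,1]}(\psi)$.
   Context: Conventions on structures and $\mathrm{ESO}_{\mathbb R}$. Let $\tau$ be a finite relational vocabulary and $\sigma$ a finite functional vocabulary. An $\mathbb R$-structure of vocabulary $\tau\cup\sigma$ is a tuple $\mathfrak A=(A,\mathbb R,(R^{\mathfrak A})_{R\in\tau},(g^{\mathfrak A})_{g\in\sigma})$ where $A$ is a finite set with at least two elements, each $R^{\mathfrak A}\subseteq A^{\mathrm{ar}(R)}$ and each $g^{\mathfrak A}\colon A^{\mathrm{ar}(g)}\to\mathbb R$. $\mathfrak A$ is a $d[0,1]$-structure if every $g^{\mathfrak A}$ is a probability distribution on $A^{\mathrm{ar}(g)}$. Numerical terms are built by $i::=c\mid f(\vec x)\mid i+i\mid i\times i\mid \mathrm{SUM}_{\vec y}\,i$, where $c\in\mathbb R$ is a constant, $f$ is a function symbol or function variable, and $\vec x,\vec y$ are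 tuples of first-order variables, with the usual real interpretation. For $O\subseteq\{+,\times,\mathrm{SUM}\}$, $E\subseteq\{=,<,\le\}$, $C\subseteq\mathbb R$, the formulae of $\mathrm{ESO}_{\mathbb R}[O,E,C]$ are given by $\phi::= x=y\mid\neg x=y\mid i\,e\,j\mid\neg\, i\,e\,j\mid R(\vec x)\mid\neg R(\vec x)\mid\phi\wedge\phi\mid\phi\vee\phi\mid\exists x\phi\mid\forall x\phi\mid\exists f\phi$, where $i,j$ are numerical terms using only operations in $O$ and constants in $C$, $e\in E$, $R\in\tau$, and $f$ is a function variable; first-order variables range over $A$ and $\exists f$ ranges over all functions $A^{\mathrm{ar}(f)}\to\mathbb R$. $\mathrm{ESO}_{\mathbb R}[\le,+,0,1]$ means $O=\{+\}$, $E=\{\le\}$, $C=\{0,1\}$. Teams and probabilistic team semantics. A probabilistic team is a function $\mathbb X\colon X\to[0,1]$ with $\sum_{s\in X}\mathbb X(s)=1$, $X$ a finite set of assignments from a finite variable set into a finite set $A$. Write $\mathrm{supp}(\mathbb X)=\{s:\mathbb X(s)>0\}$, $|\mathbb X|=\sum_s\mathbb X(s)$, $\mathbb X_\alpha$ for the restriction to assignments satisfying first-order $\alpha$. The marginal of $\mathbb X$ on $V$ is $s\mapsto\sum_{t\upharpoonright V=s}\mathbb X(t)$; $\mathbb X[A/x]$ is the team on assignments $s$ over $\mathrm{Dom}(\mathbb X)\cup\{x\}$ with $s(x)\in A$, given by $s\mapsto\mathbb X'(s\upharpoonright(\mathrm{Dom}(\mathbb X)\setminus\{x\}))/|A|$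 with $\mathbb X'$ the marginal on $\mathrm{Dom}(\mathbb X)\setminus\{x\}$. Formulae are in negation normal form; $\alpha\leftrightarrow\beta$ for first-order $\alpha,\beta$ abbreviates $(\alpha\wedge\beta)\vee(\alpha^\bot\wedge\beta^\bot)$ with $\alpha^\bot$ the negation normal form of $\neg\alpha$. Clauses: literals hold iff they hold for every $s\in\mathrm{supp}(\mathbb X)$; $\wedge$ componentwise; $\psi\vee\theta$ iff $\mathbb X=\alpha\mathbb Y+(1-\alpha)\mathbb Z$ for probabilistic teams $\mathbb Y\models\psi$, $\mathbb Z\models\theta$, $\alpha\in[0,1]$; $\forall x\psi$ iff $\mathbb X[A/x]\models\psi$; $\exists x\psi$ iff some probabilistic team over $\mathrm{Dom}(\mathbb X)\cup\{x\}$ with the same marginal on $\mathrm{Dom}(\mathbb X)\setminus\{x\}$ as $\mathbb X$ satisfies $\psi$. Atoms: $\vec x\approx\vec y$ iff $|\mathbb X_{\vec x=\vec a}|=|\mathbb X_{\vec y=\vec a}|$ for all $\vec a$; $\mathrm{dep}(c)$ iff $c$ is constant on $\mathrm{supp}(\mathbb X)$; $\vec y\perp\!\!\!\perp\vec z$ iff $|\mathbb X_{\vec y=\vec b}|\cdot|\mathbb X_{\vec z=\vec c}|=|\mathbb X_{\vec y\vec z=\vec b\vec c}|\cdot|\mathbb X|$ for all $\vec b,\vec c$. $\mathrm{FO}(\perp\!\!\!\perp)$ is first-order logic extended with marginal independence atoms. Comparing team logics with ESO. For a probabilistic team $\mathbb X$ with variable domain $\{x_1,\dots,x_n\}$ and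 values in $A$, $f_{\mathbb X}\colon A^n\to[0,1]$ is given by $f_{\mathbb X}(s(x_1),\dots,s(x_n))=\mathbb X(s)$ for $s$ in the team and $0$ elsewhere. For $\phi\in\mathrm{FO}(\mathcal C)$ of vocabulary $\tau$ with free variables $x_1,\dots,x_n$, $\mathrm{Struc}_{d[0,1]}(\phi)$ is the class of $d[0,1]$-structures $\mathfrak A$ of vocabulary $\tau\cup\{f\}$ ($f$ $n$-ary) such that the $\tau$-reduct of $\mathfrak A$ satisfies $\phi$ under the probabilistic team $\mathbb X$ with $f_{\mathbb X}=f^{\mathfrak A}$. For an ESO-type formula with one free $n$-ary function variable $f$ and no free first-order variables, $\mathrm{Struc}_{d[0,1]}$ is the class of $d[0,1]$-structures of vocabulary $\tau\cup\{f\}$ satisfying it. For logics $\mathcal L,\mathcal L'$, $\mathcal L\le\mathcal L'$ means every $\phi\in\mathcal L$ has some $\phi'\in\mathcal L'$ with $\mathrm{Struc}_{d[0,1]}(\phi)=\mathrm{Struc}_{d[0,1]}(\phi')$. *)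

From HB Require Import structures.
From mathcomp Require Import all_boot all_order all_algebra.
From mathcomp Require Import Rstruct.
Notation R := Rdefinitions.R.
Set Implicit Arguments. Unset Strict Implicit. Unset Printing Implicit Defensive.
Import Order.TTheory GRing.Theory Num.Theory.
Local Open Scope ring_scope.

(* A finite relational vocabulary tau: relation symbol r (r < size tau)
   has arity nth 0 tau r. *)
Definition vocab := seq nat.
Definition rel_ok (tau : vocab) (r k : nat) : bool :=
  (r < size tau)%N && (nth 0%N tau r == k).

(* A structure is given by a finite universe A (with 1 < #|A|), an
   interpretation rels of the relation symbols (rels r is the relation
   R_r^A, a predicate on tuples, only meaningful for r < size tau on
   tuples of length ar(R_r)) and the interpretation fA : A^n -> R of the
   single n-ary function symbol f. *)
Definition d01 (A : finType) (n : nat) (fA : n.-tuple A -> R) : Prop :=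
  (forall t, 0 <= fA t) /\ \sum_t fA t = 1.

Inductive foi (N : nat) : Type :=
  | FEq of 'I_N & 'I_N
  | FNeq of 'I_N & 'I_N
  | FRel of nat & seq 'I_N
  | FNRel of nat & seq 'I_N
  | FInd of seq 'I_N & seq 'I_N          (* marginal independence  y _||_ z *)
  | FAnd of foi N & foi N
  | FOr of foi N & foi N
  | FEx of 'I_N & foi N
  | FAll of 'I_N & foi N.

Fixpoint wf_fo N (tau : vocab) (phi : foi N) : bool :=
  match phi with
  | FRel r xs | FNRel r xs => rel_ok tau r (size xs)
  | FAnd p q | FOr p q => wf_fo tau p && wf_fo tau q
  | FEx _ p | FAll _ p => wf_fo tau p
  | _ => true
  end.

Fixpoint fv N (phi : foi N) : {set 'I_N} :=
  match phi with
  | FEq x y | FNeq x y => [set x; y]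
  | FRel _ xs | FNRel _ xs => [set v in xs]
  | FInd ys zs => [set v in ys ++ zs]
  | FAnd p q | FOr p q => fv p :|: fv q
  | FEx x p | FAll x p => fv p :\ x
  end.

Definition fvs N (phi : foi N) : seq 'I_N := [seq v <- enum 'I_N | v \in fv phi].

(* An assignment with variable domain D is a finite function
   'I_N -> option A, defined (Some) exactly on D. *)
Definition asg (N : nat) (A : finType) := {ffun 'I_N -> option A}.
Definition team (N : nat) (A : finType) := asg N A -> R.

Definition dom_ok N (A : finType) (D : {set 'I_N}) (s : asg N A) : bool :=
  [forall v, (s v != None) == (v \in D)].

Definition pteam N (A : finType) (D : {set 'I_N}) (X : team N A) : Prop :=
  (forall s, 0 <= X s) /\ (forall s, X s != 0 -> dom_ok D s) /\ \sum_(s : asg N A) X s = 1.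

Definition mass N (A : finType) (X : team N A) (P : pred (asg N A)) : R :=
  \sum_(s : asg N A | P s) X s.

Definition marg N (A : finType) (V : {set 'I_N}) (X : team N A) (s : asg N A) : R :=
  \sum_(t : asg N A | [forall v in V, t v == s v]) X t.

Definition vals N (A : finType) (s : asg N A) (xs : seq 'I_N) : seq (option A) :=
  [seq s v | v <- xs].

Definition team_univ N (A : finType) (D : {set 'I_N}) (x : 'I_N) (X : team N A) : team N A :=
  fun s => if dom_ok (x |: D) s then marg (D :\ x) X s / #|A|%:R else 0.

(* Probabilistic team semantics: D is the variable domain of X. *)
Fixpoint fsat N (A : finType) (rels : nat -> seq A -> bool)
    (D : {set 'I_N}) (X : team N A) (phi : foi N) {struct phi} : Prop :=
  match phi with
  | FEq x y => forall s, X s != 0 -> s x = s y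
  | FNeq x y => forall s, X s != 0 -> s x <> s y
  | FRel r xs => forall s, X s != 0 -> rels r (pmap (fun v => s v) xs)
  | FNRel r xs => forall s, X s != 0 -> ~~ rels r (pmap (fun v => s v) xs)
  | FInd ys zs =>
      forall b c : seq A, size b = size ys -> size c = size zs ->
        mass X (fun s => vals s ys == map Some b) * mass X (fun s => vals s zs == map Some c)
        = mass X (fun s => vals s (ys ++ zs) == map Some (b ++ c)) * mass X predT
  | FAnd p q => fsat rels D X p /\ fsat rels D X q
  | FOr p q =>
      exists (a : R) (Y Z : team N A),
        [/\ 0 <= a <= 1, pteam D Y, pteam D Z,
            (forall s, X s = a * Y s + (1 - a) * Z s)
          & fsat rels D Y p /\ fsat rels D Z q]
  | FEx x p =>
      exists Y : team N A,
        [/\ pteam (x |: D) Y,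
            (forall s, marg (D :\ x) Y s = marg (D :\ x) X s)
          & fsat rels (x |: D) Y p]
  | FAll x p => fsat rels (x |: D) (team_univ D x X) p
  end.

Definition team_of N (A : finType) (xs : seq 'I_N) (fA : (size xs).-tuple A -> R) : team N A :=
  fun s => \sum_(t : (size xs).-tuple A |
                   (vals s xs == map Some (tval t)) && dom_ok [set v in xs] s) fA t.

(* Struc_{d[0,1]}(phi) membership (the d[0,1] condition is imposed separately) *)
Definition struc_fo N (A : finType) (rels : nat -> seq A -> bool) (phi : foi N)
    (fA : (size (fvs phi)).-tuple A -> R) : Prop :=
  fsat rels [set v in fvs phi] (team_of fA) phi.
Arguments struc_fo {N A} rels phi fA.

(* first-order variables and function variables are named by nat;      *)
(* the free function variable f of Struc is function variable 0.       *)

Inductive nop := OAdd | OMul | OSum.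
Inductive cmp := CEq | CLt | CLe.

Inductive eterm : Type :=
  | TConst of R
  | TApp of nat & seq nat
  | TAdd of eterm & eterm
  | TMul of eterm & eterm
  | TSum of seq nat & eterm.

Inductive eso : Type :=
  | EEq of nat & nat
  | ENeq of nat & nat
  | ECmp of cmp & eterm & eterm
  | ENCmp of cmp & eterm & eterm
  | ERel of nat & seq nat
  | ENRel of nat & seq nat
  | EAnd of eso & eso
  | EOr of eso & eso
  | EEx of nat & eso
  | EAll of nat & eso
  | EExF of nat & nat & eso.            (* EExF g k psi : exists k-ary g, psi *)

Fixpoint term_in (O : nop -> Prop) (C : R -> Prop) (t : eterm) : Prop :=
  match t with
  | TConst c => C c
  | TApp _ _ => True
  | TAdd i j => O OAdd /\ term_in O C i /\ term_in O C j
  | TMul i j => O OMul /\ term_in O C i /\ term_in O C j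
  | TSum _ i => O OSum /\ term_in O C i
  end.

Fixpoint eso_in (O : nop -> Prop) (E : cmp -> Prop) (C : R -> Prop) (psi : eso) : Prop :=
  match psi with
  | ECmp e i j | ENCmp e i j => E e /\ term_in O C i /\ term_in O C j
  | EAnd p q | EOr p q => eso_in O E C p /\ eso_in O E C q
  | EEx _ p | EAll _ p | EExF _ _ p => eso_in O E C p
  | _ => True
  end.

Definition ESO_le_plus_01 (psi : eso) : Prop :=
  eso_in (fun o => o = OAdd) (fun e => e = CLe) (fun c => c = 0 \/ c = 1) psi.

(* well-formedness: bv = bound first-order variables, fa = arities of the
   function variables in scope *)
Fixpoint wf_term (bv : seq nat) (fa : nat -> option nat) (t : eterm) : bool :=
  match t with
  | TConst _ => true
  | TApp g xs => all (fun v => v \in bv) xs && (fa g == Some (size xs))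
  | TAdd i j | TMul i j => wf_term bv fa i && wf_term bv fa j
  | TSum ys i => wf_term (ys ++ bv) fa i
  end.

Fixpoint wf_eso_rec (tau : vocab) (bv : seq nat) (fa : nat -> option nat) (psi : eso) : bool :=
  match psi with
  | EEq x y | ENeq x y => (x \in bv) && (y \in bv)
  | ECmp _ i j | ENCmp _ i j => wf_term bv fa i && wf_term bv fa j
  | ERel r xs | ENRel r xs => all (fun v => v \in bv) xs && rel_ok tau r (size xs)
  | EAnd p q | EOr p q => wf_eso_rec tau bv fa p && wf_eso_rec tau bv fa q
  | EEx x p | EAll x p => wf_eso_rec tau (x :: bv) fa p
  | EExF g k p => wf_eso_rec tau bv (fun h => if h == g then Some k else fa h) p
  end.

(* psi is an ESO formula of vocabulary tau with the single free n-ary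
   function variable f (= function variable 0) and no free first-order
   variables *)
Definition wf_eso (tau : vocab) (n : nat) (psi : eso) : bool :=
  wf_eso_rec tau [::] (fun h => if h == 0%N then Some n else None) psi.

Definition cmp_eval (e : cmp) (a b : R) : Prop :=
  match e with CEq => a = b | CLt => a < b | CLe => a <= b end.

Definition upd1 (A : Type) (s : nat -> A) (x : nat) (a : A) : nat -> A :=
  fun v => if v == x then a else s v.

Definition upds (A : Type) (s : nat -> A) (ys : seq nat) (a : seq A) : nat -> A :=
  fun v => if v \in ys then nth (s v) a (index v ys) else s v.

Fixpoint teval (A : finType) (s : nat -> A) (F : nat -> seq A -> R) (t : eterm) : R :=
  match t with
  | TConst c => c
  | TApp g xs => F g [seq s v | v <- xs]
  | TAdd i j => teval s F i + teval s F j
  | TMul i j => teval s F i * teval s F j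
  | TSum ys i => \sum_(a : (size ys).-tuple A) teval (upds s ys (tval a)) F i
  end.

Fixpoint esat (A : finType) (rels : nat -> seq A -> bool)
    (s : nat -> A) (F : nat -> seq A -> R) (psi : eso) {struct psi} : Prop :=
  match psi with
  | EEq x y => s x = s y
  | ENeq x y => s x <> s y
  | ECmp e i j => cmp_eval e (teval s F i) (teval s F j)
  | ENCmp e i j => ~ cmp_eval e (teval s F i) (teval s F j)
  | ERel r xs => rels r [seq s v | v <- xs]
  | ENRel r xs => ~~ rels r [seq s v | v <- xs]
  | EAnd p q => esat rels s F p /\ esat rels s F q
  | EOr p q => esat rels s F p \/ esat rels s F q
  | EEx x p => exists a : A, esat rels (upd1 s x a) F p
  | EAll x p => forall a : A, esat rels (upd1 s x a) F p
  | EExF g _ p => exists h : seq A -> R, esat rels s (upd1 F g h) p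
  end.

Definition fenv0 (A : finType) (n : nat) (fA : n.-tuple A -> R) : nat -> seq A -> R :=
  fun g a => if g == 0%N then oapp fA 0 (insub a : option (n.-tuple A)) else 0.

(* Struc_{d[0,1]}(psi) membership; psi has no free first-order variables,
   so the initial first-order assignment s is irrelevant. *)
Definition struc_eso (A : finType) (n : nat) (rels : nat -> seq A -> bool)
    (fA : n.-tuple A -> R) (psi : eso) : Prop :=
  forall s : nat -> A, esat rels s (fenv0 fA) psi.

From HB Require Import structures.
From mathcomp Require Import all_boot all_order all_algebra.
From mathcomp Require Import Rstruct.
From mathcomp Require Import ring lra zify.
From Stdlib Require Import ClassicalEpsilon Classical FunctionalExtensionality.
Import Order.TTheory GRing.Theory Num.Theory.
Local Open Scope ring_scope.
Set Implicit Arguments. Unset Strict Implicit.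

(* The witness is the independence atom  x0 _||_ x1.  An ESO_R[<=,+,0,1]
   formula only adds values of (quantified) functions and compares sums with
   <=; hence it survives post-composing all functions with a map T that is
   additive on a group containing the relevant finitely many values, fixes
   0 and 1, and is strictly increasing on those values (esat_transport,
   struc_eso_transport).  Independence is multiplicative and does not.

   Concretely, let p = sqrt 2 / 2 and take the product of two Bernoulli(p)
   weights on pairs of booleans, which makes x0 and x1 independent.  Using a
   Q-linear functional lam that vanishes on Q and sends sqrt 2 to 1 (built
   Hamel-basis style on a finite-dimensional Q-subspace, irrational_functional)
   and a small e > 0 (small_perturbation), T x = x + e * lam x is such a map;
   it fixes p^2 = 1/2 but moves p.  The transformed weight is still a
   distribution satisfying the ESO formula, yet independence would force
   T(p)^2 = T(p^2) = p^2, i.e. T p = p (perturbed_product_indep). *)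

(* No natural number squared is twice a nonzero square: compare the
   2-adic valuations, which are even on the left and odd on the right. *)
Lemma nat_sq_neq_double_sq (a b : nat) : (0 < b)%N -> (a * a)%N <> (2 * (b * b))%N.
Proof.
move=> b_gt0 E.
have a_gt0 : (0 < a)%N by case: a E => [|a] //; rewrite muln0 => /esym/eqP; rewrite muln_eq0; lia.
have := congr1 (logn 2) E.
rewrite !lognM ?muln_gt0 ?a_gt0 ?b_gt0 // (logn_prime 2 (isT : prime 2)) eqxx; lia.
Qed.

Lemma sqrt2_irrational (F : rcfType) (q : rat) : Num.sqrt (2 : F) <> ratr q.
Proof.
move=> sqE.
have qq2 : q * q = 2.
  apply: (fmorph_inj (@ratr F)); rewrite rmorphM /= -sqE -expr2 sqr_sqrtr ?ler0n //.
  by rewrite -[2%R]/(2%:R) rmorph_nat.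
have nd : (numq q * numq q = 2 * (denq q * denq q))%R.
  apply: (@intr_inj rat); rewrite !rmorphM /=.
  have -> : (numq q)%:~R = q * (denq q)%:~R :> rat.
    by rewrite -{2}(divq_num_den q) mulfVK // intr_eq0 gt_eqF ?denq_gt0.
  by rewrite mulrACA qq2.
move/(congr1 absz): nd; rewrite !abszM /=.
by apply: nat_sq_neq_double_sq; rewrite absz_gt0 gt_eqF ?denq_gt0.
Qed.

Section RationalLinearFunctionals.
Variable F : numFieldType.

Record qlinear (S : F -> Prop) (lam : F -> F) : Prop := {
  qsub1 : S 1;
  qsubD : forall x y, S x -> S y -> S (x + y);
  qsubZ : forall q x, S x -> S (ratr q * x);
  qlinD : forall x y, S x -> S y -> lam (x + y) = lam x + lam y;
  qlinZ : forall q x, S x -> lam (ratr q * x) = ratr q * lam x }.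

Lemma qsub0 S lam : qlinear S lam -> S 0.
Proof. by move=> ql; have := qsubZ ql 0 (qsub1 ql); rewrite rmorph0 mul0r. Qed.

Lemma qlin0 S lam : qlinear S lam -> lam 0 = 0.
Proof. by move=> ql; have := qlinZ ql 0 (qsub1 ql); rewrite rmorph0 !mul0r. Qed.

Definition qextends (S : F -> Prop) (lam : F -> F) (S' : F -> Prop) (lam' : F -> F) :=
  forall x, S x -> S' x /\ lam' x = lam x.

Lemma qextends_trans S1 l1 S2 l2 S3 l3 :
  qextends S1 l1 S2 l2 -> qextends S2 l2 S3 l3 -> qextends S1 l1 S3 l3.
Proof. by move=> e12 e23 x /e12 [/e23 [S3x ->] ->]. Qed.

(* If v lies outside the subspace S, then writing w + q v (w in S, q
   rational) is unique; this makes the extension below well defined. *)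
Lemma qspan_unique S lam v w1 w2 q1 q2 : qlinear S lam -> ~ S v ->
  S w1 -> S w2 -> w1 + ratr q1 * v = w2 + ratr q2 * v -> w1 = w2 /\ q1 = q2.
Proof.
move=> ql nSv Sw1 Sw2 E.
have [q12|q12] := eqVneq q1 q2.
  by subst q2; split => //; exact: addIr E.
exfalso; apply: nSv.
have dq : ratr q2 - ratr q1 != 0 :> F.
  by rewrite subr_eq0 (inj_eq (fmorph_inj _)) eq_sym.
have -> : v = ratr ((q2 - q1)^-1) * (w1 + ratr (-1) * w2).
  rewrite fmorphV rmorphB rmorphN rmorph1 /=; apply: (mulfI dq).
  rewrite mulrA mulfV // mul1r.
  have -> : w1 = w2 + ratr q2 * v - ratr q1 * v by rewrite -E addrK.
  ring.
exact: (qsubZ ql _ (qsubD ql Sw1 (qsubZ ql _ Sw2))).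
Qed.

Lemma qlinear_extend S lam v c : qlinear S lam -> ~ S v ->
  exists S' lam', [/\ qlinear S' lam', qextends S lam S' lam', S' v & lam' v = c].
Proof.
move=> ql nSv.
pose decomp x (p : F * rat) := S p.1 /\ x = p.1 + ratr p.2 * v.
pose pick x := epsilon (inhabits (0 : F, 0 : rat)) (decomp x).
have pickE w q : S w -> pick (w + ratr q * v) = (w, q).
  move=> Sw; have : decomp (w + ratr q * v) (pick (w + ratr q * v)).
    by apply: epsilon_spec; exists (w, q).
  case: (pick _) => w' q' [/= Sw' E].
  by case: (qspan_unique ql nSv Sw Sw' E) => -> ->.
pose lam' x := lam (pick x).1 + ratr (pick x).2 * c.
have lam'E w q : S w -> lam' (w + ratr q * v) = lam w + ratr q * c.
  by move=> Sw; rewrite /lam' pickE.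
have S0 := qsub0 ql.
exists (fun x => exists w q, S w /\ x = w + ratr q * v), lam'; split.
- split.
  + by exists 1, 0; rewrite rmorph0 mul0r addr0; split => //; apply: qsub1 ql.
  + move=> _ _ [w1 [q1 [Sw1 ->]]] [w2 [q2 [Sw2 ->]]].
    exists (w1 + w2), (q1 + q2); split; first exact: (qsubD ql Sw1 Sw2).
    by rewrite rmorphD /=; ring.
  + move=> q _ [w1 [q1 [Sw1 ->]]].
    exists (ratr q * w1), (q * q1); split; first exact: (qsubZ ql _ Sw1).
    by rewrite rmorphM /=; ring.
  + move=> _ _ [w1 [q1 [Sw1 ->]]] [w2 [q2 [Sw2 ->]]].
    have -> : w1 + ratr q1 * v + (w2 + ratr q2 * v) = (w1 + w2) + ratr (q1 + q2) * v.
      by rewrite rmorphD /=; ring.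
    have Sw12 := qsubD ql Sw1 Sw2.
    rewrite !lam'E // (qlinD ql Sw1 Sw2) rmorphD /=; ring.
  + move=> q _ [w1 [q1 [Sw1 ->]]].
    have -> : ratr q * (w1 + ratr q1 * v) = ratr q * w1 + ratr (q * q1) * v.
      by rewrite rmorphM /=; ring.
    have Sqw1 := qsubZ ql q Sw1.
    rewrite !lam'E // (qlinZ ql _ Sw1) rmorphM /=; ring.
- move=> x Sx; split; first by exists x, 0; rewrite rmorph0 mul0r addr0.
  by have := lam'E x 0 Sx; rewrite rmorph0 !mul0r !addr0.
- by exists 0, 1; rewrite rmorph1 mul1r add0r.
- by have := lam'E 0 1 S0; rewrite rmorph1 !mul1r add0r (qlin0 ql) add0r.
Qed.

Lemma qlinear_extend_seq S lam (L : seq F) : qlinear S lam ->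
  exists S' lam', [/\ qlinear S' lam', qextends S lam S' lam' & {in L, forall x, S' x}].
Proof.
elim: L S lam => [|v L IH] S lam ql.
  by exists S, lam; split => // x _; split.
have [S1 [l1 [ql1 e1 Sv]]] : exists S1 l1, [/\ qlinear S1 l1, qextends S lam S1 l1 & S1 v].
  case: (classic (S v)) => [Sv|nSv]; first by exists S, lam; split => // x; split.
  by have [S1 [l1 [ql1 e1 Sv _]]] := qlinear_extend 0 ql nSv; exists S1, l1.
have [S2 [l2 [ql2 e2 SL]]] := IH _ _ ql1.
exists S2, l2; split => //; first exact: qextends_trans e1 e2.
by move=> x; rewrite inE => /orP[/eqP ->|/SL //]; case: (e2 v Sv).
Qed.

Lemma irrational_functional (v : F) (L : seq F) : (forall q, v <> ratr q) ->
  exists S lam, [/\ qlinear S lam, lam 1 = 0, S v, lam v = 1 & {in L, forall x, S x}].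
Proof.
move=> v_irr.
have qlQ : qlinear (fun x => exists q, x = ratr q) (fun _ => 0).
  split => [|x y [q1 ->] [q2 ->]|q x [q1 ->]|x y _ _|q x _]; rewrite ?addr0 ?mulr0 //.
  - by exists 1; rewrite rmorph1.
  - by exists (q1 + q2); rewrite rmorphD.
  - by exists (q * q1); rewrite rmorphM.
have v_notQ : ~ exists q, v = ratr q by case=> q /v_irr.
have [S1 [l1 [ql1 e1 Sv l1v]]] := qlinear_extend 1 qlQ v_notQ.
have [S2 [l2 [ql2 e2 SL]]] := qlinear_extend_seq L ql1.
have [_ l21] := e2 1 (qsub1 ql1); have [_ l11] := e1 1 (ex_intro _ 1 (esym (rmorph1 _))).
have [S2v l2v] := e2 v Sv.
by exists S2, l2; split; rewrite ?l21 ?l11 ?l2v.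
Qed.
End RationalLinearFunctionals.

Section SmallPerturbations.
Variable F : realFieldType.
Variable lam : F -> F.

Lemma pair_perturbation (x y : F) : x < y ->
  exists2 e, 0 < e & forall e', 0 < e' <= e -> x + e' * lam x < y + e' * lam y.
Proof.
move=> xy; pose K := `|lam x| + `|lam y| + 1.
have K_gt0 : 0 < K by rewrite /K ltr_pwDr // addr_ge0.
have lamK : lam x - lam y < K.
  by rewrite /K; have := ler_norm (lam x); have := ler_norm (- lam y); rewrite normrN; lra.
exists ((y - x) / K) => [|e' /andP[e'0 e'le]]; first by rewrite divr_gt0 // subr_gt0.
have : e' * (lam x - lam y) < (y - x) / K * K.
  rewrite -(ltr_pM2l e'0) in lamK.
  by apply: (lt_le_trans lamK); rewrite ler_pM2r.
rewrite divfK ?gt_eqF //; lra.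
Qed.

Lemma small_perturbation (L : seq F) :
  exists2 e, 0 < e & {in L &, forall x y, x < y -> x + e * lam x < y + e * lam y}.
Proof.
pose ok e (p : F * F) := p.1 < p.2 -> p.1 + e * lam p.1 < p.2 + e * lam p.2.
suff [e e0 He] : exists2 e, 0 < e & forall e', 0 < e' <= e ->
    forall p, p \in [seq (x, y) | x <- L, y <- L] -> ok e' p.
  exists e => // x y xL yL; apply: (He e _ (x, y)); first by rewrite e0 lexx.
  by apply/allpairsP; exists (x, y).
elim: [seq _ | x <- L, y <- L] => [|[x y] P [e e0 He]].
  by exists 1 => // e' _ p; rewrite in_nil.
have [e1 e10 He1] : exists2 e1, 0 < e1 & forall e', 0 < e' <= e1 -> ok e' (x, y).
  have [xy|yx] := ltP x y; last by exists 1 => // e' _; rewrite /ok /= => xy; lra.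
  by have [e1 e10 He1] := pair_perturbation xy; exists e1 => // e' /He1 ? _.
exists (Num.min e e1) => [|e' /andP[e'0]]; first by rewrite lt_min e0 e10.
rewrite le_min => /andP[e'e e'e1] p; rewrite in_cons => /orP[/eqP ->|pP].
  by apply: He1; rewrite e'0.
by apply: He => //; rewrite e'0.
Qed.
End SmallPerturbations.

Definition plus_only (o : nop) : Prop := o = OAdd.
Definition const01 (c : R) : Prop := c = 0 \/ c = 1.

Definition map_env (A : Type) (T : R -> R) (F : nat -> seq A -> R) : nat -> seq A -> R :=
  fun g a => T (F g a).

Fixpoint app_values (A : Type) (s : nat -> A) (F : nat -> seq A -> R) (t : eterm) : seq R :=
  match t with
  | TApp g xs => [:: F g [seq s v | v <- xs]]
  | TAdd i j | TMul i j => app_values s F i ++ app_values s F j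
  | TConst _ | TSum _ _ => [::]
  end.

(* Such maps preserve ESO_R[<=,+,0,1]-formulas whose
   relevant values lie in L. *)
Record admissible (T : R -> R) (G : R -> Prop) (L : seq R) : Prop := {
  adm_G0 : G 0;
  adm_G1 : G 1;
  adm_GD : forall x y, G x -> G y -> G (x + y);
  adm_TD : forall x y, G x -> G y -> T (x + y) = T x + T y;
  adm_T1 : T 1 = 1;
  adm_GL : {in L, forall x, G x};
  adm_mono : {in L &, forall x y, x < y -> T x < T y} }.

Lemma subset_cat (X : eqType) (s1 s2 : seq X) :
  {subset s1 <= s1 ++ s2} /\ {subset s2 <= s1 ++ s2}.
Proof. by split=> x; rewrite mem_cat => ->; rewrite ?orbT. Qed.

Section Admissible.
Variables (T : R -> R) (G : R -> Prop) (L : seq R).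
Hypothesis adm : admissible T G L.

Lemma adm_T0 : T 0 = 0.
Proof.
have := adm_TD adm (adm_G0 adm) (adm_G0 adm); rewrite addr0 => T00.
by apply: (addrI (T 0)); rewrite addr0 -T00.
Qed.

Lemma admissible_sub (L' : seq R) : {subset L' <= L} -> admissible T G L'.
Proof.
case: adm => G0 G1 GD TD T1 GL mono sub; split => // [x /sub|x y /sub xL /sub]; first exact: GL.
exact: mono.
Qed.

Lemma admissible_le : {in L &, forall x y, (T x <= T y) = (x <= y)}.
Proof.
move=> x y xL yL; have mono := adm_mono adm.
case: (ltgtP x y) => [xy|yx|->]; last by rewrite lexx.
  by rewrite ltW // mono.
by apply/negbTE; rewrite -ltNge mono.
Qed.

End Admissible.

(* On a term of the fragment an admissible T commutes with evaluation (the
   value is a sum of 0, 1 and values in L, so it lies in G). *)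
Lemma teval_transport (A : finType) (s : nat -> A) (F : nat -> seq A -> R)
    (T : R -> R) (G : R -> Prop) (t : eterm) :
  term_in plus_only const01 t -> admissible T G (app_values s F t) ->
  G (teval s F t) /\ T (teval s F t) = teval s (map_env T F) t.
Proof.
elim: t => [c|g xs|i IHi j IHj|i IHi j IHj|ys i IHi] /= tf adm; try by case: tf.
- by case: tf => ->; split; [exact: adm_G0 adm|exact: adm_T0 adm|exact: adm_G1 adm|exact: adm_T1 adm].
- by split => //; apply: (adm_GL adm); rewrite mem_head.
- case: tf => _ [ti tj].
  have [sub_i sub_j] := subset_cat (app_values s F i) (app_values s F j).
  have [Gi Ti] := IHi ti (admissible_sub adm sub_i).
  have [Gj Tj] := IHj tj (admissible_sub adm sub_j).
  by split; [exact: (adm_GD adm Gi Gj) | rewrite (adm_TD adm Gi Gj) Ti Tj].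
Qed.

Lemma cmp_transport (A : finType) (s : nat -> A) (F : nat -> seq A -> R) (i j : eterm) :
  term_in plus_only const01 i -> term_in plus_only const01 j ->
  exists L, forall T G, admissible T G L ->
    (teval s (map_env T F) i <= teval s (map_env T F) j) = (teval s F i <= teval s F j).
Proof.
move=> ti tj; set vi := app_values s F i; set vj := app_values s F j.
exists (teval s F i :: teval s F j :: vi ++ vj) => T G adm.
have [sub_i sub_j] := subset_cat vi vj.
have sub_ij : {subset vi ++ vj <= teval s F i :: teval s F j :: vi ++ vj}.
  by move=> x xij; rewrite !inE xij !orbT.
have [_ <-] := teval_transport ti (admissible_sub adm (fun x xi => sub_ij x (sub_i x xi))).
have [_ <-] := teval_transport tj (admissible_sub adm (fun x xj => sub_ij x (sub_j x xj))).
by apply: (admissible_le adm); rewrite !inE eqxx ?orbT.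
Qed.

(* Existential function
   quantifiers are witnessed by the transformed witnesses. *)
Lemma esat_transport (A : finType) (rels : nat -> seq A -> bool) (psi : eso) :
  ESO_le_plus_01 psi -> forall s F, esat rels s F psi ->
  exists L, forall T G, admissible T G L -> esat rels s (map_env T F) psi.
Proof.
rewrite /ESO_le_plus_01 -/plus_only -/const01.
elim: psi => [x y|x y|e i j|e i j|r xs|r xs|p IHp q IHq|p IHp q IHq|x p IHp|x p IHp|g k p IHp]
  /= frag s F; try by exists [::].
- case: frag => -> [ti tj] Hle.
  by have [L HL] := cmp_transport s F ti tj; exists L => T G adm; rewrite /= (HL T G adm).
- case: frag => -> [ti tj] Hnle.
  by have [L HL] := cmp_transport s F ti tj; exists L => T G adm; rewrite /= (HL T G adm).
- case: frag => fp fq [Hp Hq].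
  have [L1 H1] := IHp fp _ _ Hp; have [L2 H2] := IHq fq _ _ Hq.
  have [sub1 sub2] := subset_cat L1 L2.
  exists (L1 ++ L2) => T G adm.
  by split; [apply: H1 (admissible_sub adm sub1) | apply: H2 (admissible_sub adm sub2)].
- case: frag => fp fq [Hp|Hq].
    by have [L1 H1] := IHp fp _ _ Hp; exists L1 => T G adm; left; apply: H1 adm.
  by have [L2 H2] := IHq fq _ _ Hq; exists L2 => T G adm; right; apply: H2 adm.
- case=> a Ha; have [L HL] := IHp frag _ _ Ha.
  by exists L => T G adm; exists a; apply: HL adm.
- move=> Ha; have [Ls HLs] := fin_all_exists (fun a => IHp frag _ _ (Ha a)).
  exists (flatten [seq Ls a | a <- enum A]) => T G adm a; apply: HLs.
  apply: (admissible_sub adm) => z za; apply/flattenP.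
  by exists (Ls a) => //; apply/mapP; exists a; rewrite ?mem_enum.
- case=> h Hh; have [L HL] := IHp frag _ _ Hh.
  exists L => T G adm; exists (fun a => T (h a)).
  have -> : upd1 (map_env T F) g (fun a => T (h a)) = map_env T (upd1 F g h).
    by apply: functional_extensionality => g'; rewrite /map_env /upd1; case: (g' == g).
  exact: HL adm.
Qed.

Lemma teval_agree (A : finType) bv fa (s s' : nat -> A) (F : nat -> seq A -> R) (t : eterm) :
  wf_term bv fa t -> term_in plus_only const01 t -> {in bv, s =1 s'} ->
  teval s F t = teval s' F t.
Proof.
move=> + + ag; elim: t => [c|g xs|i IHi j IHj|i IHi j IHj|ys i IHi] //=.
- by move=> /andP[/allP xs_bv _] _; congr (F g _); apply/eq_in_map => v /xs_bv/ag.
- by move=> /andP[wi wj] [_ [ti tj]]; rewrite IHi // IHj.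
- by move=> _ [].
- by move=> _ [].
Qed.

Lemma esat_agree (A : finType) (rels : nat -> seq A -> bool) tau (psi : eso) :
  ESO_le_plus_01 psi -> forall bv fa (s s' : nat -> A) F, wf_eso_rec tau bv fa psi ->
  {in bv, s =1 s'} -> esat rels s F psi -> esat rels s' F psi.
Proof.
rewrite /ESO_le_plus_01 -/plus_only -/const01.
elim: psi => [x y|x y|e i j|e i j|r xs|r xs|p IHp q IHq|p IHp q IHq|x p IHp|x p IHp|g k p IHp]
  /= frag bv fa s s' F wf ag.
- by case/andP: wf => xbv ybv; rewrite -!ag.
- by case/andP: wf => xbv ybv; rewrite -!ag.
- case: frag => _ [ti tj]; case/andP: wf => wi wj.
  by rewrite -(teval_agree F wi ti ag) -(teval_agree F wj tj ag).
- case: frag => _ [ti tj]; case/andP: wf => wi wj.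
  by rewrite -(teval_agree F wi ti ag) -(teval_agree F wj tj ag).
- case/andP: wf => /allP xs_bv _.
  by have -> : [seq s' v | v <- xs] = [seq s v | v <- xs] by apply/esym/eq_in_map => v /xs_bv/ag.
- case/andP: wf => /allP xs_bv _.
  by have -> : [seq s' v | v <- xs] = [seq s v | v <- xs] by apply/esym/eq_in_map => v /xs_bv/ag.
- case: frag => fp fq; case/andP: wf => wp wq [Hp Hq].
  by split; [exact: IHp fp _ _ _ _ _ wp ag Hp | exact: IHq fq _ _ _ _ _ wq ag Hq].
- case: frag => fp fq; case/andP: wf => wp wq [Hp|Hq].
    by left; exact: IHp fp _ _ _ _ _ wp ag Hp.
  by right; exact: IHq fq _ _ _ _ _ wq ag Hq.
- have ag' a : {in x :: bv, upd1 s x a =1 upd1 s' x a}.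
    by move=> v; rewrite inE /upd1; case: (v == x) => //= /ag.
  by case=> a Ha; exists a; exact: IHp frag _ _ _ _ _ wf (ag' a) Ha.
- have ag' a : {in x :: bv, upd1 s x a =1 upd1 s' x a}.
    by move=> v; rewrite inE /upd1; case: (v == x) => //= /ag.
  by move=> Ha a; exact: IHp frag _ _ _ _ _ wf (ag' a) (Ha a).
- by case=> h Hh; exists h; exact: IHp frag _ _ _ _ _ wf ag Hh.
Qed.

Lemma struc_eso_transport (A : finType) (rels : nat -> seq A -> bool) tau n
    (fA : n.-tuple A -> R) (psi : eso) :
  ESO_le_plus_01 psi -> wf_eso tau n psi -> struc_eso rels fA psi ->
  exists L, forall T G, admissible T G L -> struc_eso rels (fun t => T (fA t)) psi.
Proof.
move=> frag wf sat.
have [a0 _|A0] := pickP A; last by exists [::] => T G _ s; have := A0 (s 0%N).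
have [L HL] := esat_transport frag (sat (fun _ => a0)).
exists L => T G adm s.
have -> : fenv0 (fun t => T (fA t)) = map_env T (fenv0 fA).
  apply: functional_extensionality => g; apply: functional_extensionality => a.
  rewrite /map_env /fenv0; case: (g == 0%N); last by rewrite (adm_T0 adm).
  by case: insubP => //=; rewrite (adm_T0 adm).
by apply: (esat_agree frag wf) (HL T G adm) => v; rewrite in_nil.
Qed.

Definition x0 : 'I_2 := @Ordinal 2 0 isT.
Definition x1 : 'I_2 := @Ordinal 2 1 isT.

Definition indep : foi 2 := FInd [:: x0] [:: x1].

Lemma ord2E (v : 'I_2) : v = x0 \/ v = x1.
Proof. by case: v => [[|[|]]] // ?; [left|right]; apply/val_inj. Qed.

Lemma fvs_indep : fvs indep = [:: x0; x1].
Proof.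
have -> : fvs indep = enum 'I_2.
  apply/all_filterP/allP => v _; rewrite /= inE.
  by case: (ord2E v) => ->; rewrite !inE eqxx ?orbT.
by apply: (inj_map val_inj); rewrite val_enum_ord.
Qed.

Definition asg_of (t : seq bool) : asg 2 bool := [ffun v : 'I_2 => Some (nth false t v)].

Lemma asg_ofP (t : 2.-tuple bool) (s : asg 2 bool) :
  (vals s [:: x0; x1] == map Some (tval t)) && dom_ok [set v in [:: x0; x1]] s = (s == asg_of t).
Proof.
case: t => [[|a [|b [|]]] //= _]; apply/idP/idP.
- move=> /andP[/eqP [s0 s1] _]; apply/eqP/ffunP => v; rewrite ffunE.
  by case: (ord2E v) => ->.
- move=> /eqP ->; rewrite /vals /= !ffunE eqxx /=.
  apply/forallP => v; rewrite ffunE /= inE.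
  by case: (ord2E v) => ->; rewrite !inE eqxx ?orbT.
Qed.

Lemma sum_pairs n (n2 : n = 2%N) (h : seq bool -> R) :
  \sum_(t : n.-tuple bool) h t =
  h [:: true; true] + h [:: true; false] + h [:: false; true] + h [:: false; false].
Proof.
subst n; rewrite (reindex (fun p : bool * bool => [tuple p.1; p.2])) /=; last first.
  exists (fun t : 2.-tuple bool => (thead t, tnth t (@Ordinal 2 1 isT))) => [[a b] //|t _].
  by case: t => [[|a [|b [|]]] //= ?]; apply: val_inj.
by rewrite -(pair_big xpredT xpredT (fun a b => h [:: a; b])) /= !big_bool /= addrA.
Qed.

Lemma mass_pair_team xs (xsE : xs = [:: x0; x1]) (fA : (size xs).-tuple bool -> R)
    (P : pred (asg 2 bool)) :
  mass (team_of fA) P = \sum_(t : (size xs).-tuple bool) fA t * (P (asg_of t))%:R.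
Proof.
subst xs.
have teamE s : team_of fA s = \sum_(t : 2.-tuple bool) (s == asg_of t)%:R * fA t.
  rewrite /team_of big_mkcond; apply: eq_bigr => t _.
  by rewrite asg_ofP; case: (s == asg_of t); rewrite ?mul1r ?mul0r.
rewrite /mass big_mkcond /=.
have weighted s : (if P s then team_of fA s else 0) =
    \sum_(t : 2.-tuple bool) (P s)%:R * ((s == asg_of t)%:R * fA t).
  by rewrite teamE -big_distrr; case: (P s); rewrite /= ?mul1r ?mul0r.
under eq_bigr => s _ do rewrite weighted.
rewrite exchange_big /=; apply: eq_bigr => t _.
rewrite (bigD1 (asg_of t)) //= eqxx big1 ?addr0; first by rewrite mul1r mulrC.
by move=> s /negbTE ->; rewrite mul0r mulr0.
Qed.

Lemma size_fvs_indep : size (fvs indep) = 2%N.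
Proof. by rewrite fvs_indep. Qed.

Lemma mass_indep_team (h : seq bool -> R) (P : pred (asg 2 bool)) :
  mass (team_of (xs := fvs indep) (fun t => h t)) P =
  h [:: true; true] * (P (asg_of [:: true; true]))%:R +
  h [:: true; false] * (P (asg_of [:: true; false]))%:R +
  h [:: false; true] * (P (asg_of [:: false; true]))%:R +
  h [:: false; false] * (P (asg_of [:: false; false]))%:R.
Proof.
rewrite (mass_pair_team fvs_indep).
exact: (sum_pairs size_fvs_indep (fun t => h t * (P (asg_of t))%:R)).
Qed.

Definition pair_product (m : bool -> R) (t : seq bool) : R := m (nth false t 0) * m (nth false t 1).

Lemma product_indep (rels : nat -> seq bool -> bool) D (m : bool -> R) :
  fsat rels D (team_of (xs := fvs indep) (fun t => pair_product m t)) indep.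
Proof.
move=> /= [|b []] // [|c []] // _ _.
rewrite !mass_indep_team /pair_product /asg_of /vals /= !ffunE /=.
by case: b; case: c => /=; ring.
Qed.

Lemma indep_equation (rels : nat -> seq bool -> bool) D (h : seq bool -> R) :
  fsat rels D (team_of (xs := fvs indep) (fun t => h t)) indep ->
  (h [:: true; true] + h [:: true; false]) * (h [:: true; true] + h [:: false; true])
  = h [:: true; true] *
    (h [:: true; true] + h [:: true; false] + h [:: false; true] + h [:: false; false]).
Proof.
move=> /= /(_ [:: true] [:: true] erefl erefl).
by rewrite !mass_indep_team /asg_of /vals /= !ffunE /= !mulr1 !mulr0 !addr0.
Qed.

Definition bern (p : R) (b : bool) : R := if b then p else 1 - p.

Definition bern_values (p : R) : seq R :=
  [:: 0; p * p; p * (1 - p); (1 - p) * p; (1 - p) * (1 - p)].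

Lemma bern_product_values (p : R) (t : seq bool) : pair_product (bern p) t \in bern_values p.
Proof. by rewrite /pair_product /bern; case: (nth _ t 0); case: (nth _ t 1); rewrite !inE eqxx ?orbT. Qed.

Lemma bern_product_d01 (p : R) : 0 <= p <= 1 ->
  d01 (fun t : (size (fvs indep)).-tuple bool => pair_product (bern p) t).
Proof.
move=> /andP[p0 p1]; split => [t|].
  by rewrite /pair_product /bern; apply: mulr_ge0; case: ifP => _; lra.
by rewrite (sum_pairs size_fvs_indep (pair_product (bern p))) /pair_product /bern /=; ring.
Qed.

Section PerturbedProduct.
Variables (p : R) (T : R -> R) (G : R -> Prop).
Hypotheses (p_gt0 : 0 < p) (p_lt1 : p < 1) (adm : admissible T G (bern_values p)).

(* Since T is additive on the four product values, it maps their partial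
   sums p and 1 as expected. *)
Lemma perturbed_product_sums :
  [/\ T (p * p) + T (p * (1 - p)) = T p, T (p * p) + T ((1 - p) * p) = T p
    & T (p * p) + T (p * (1 - p)) + T ((1 - p) * p) + T ((1 - p) * (1 - p)) = 1].
Proof.
have G_ := adm_GL adm.
have [Ga Gb Gc Gd] : [/\ G (p * p), G (p * (1 - p)), G ((1 - p) * p) & G ((1 - p) * (1 - p))].
  by split; apply: G_; rewrite !inE eqxx ?orbT.
have TD := adm_TD adm; have GD := adm_GD adm.
rewrite -(TD _ _ Ga Gb) -(TD _ _ Ga Gc) -(TD _ _ (GD _ _ Ga Gb) Gc).
rewrite -(TD _ _ (GD _ _ (GD _ _ Ga Gb) Gc) Gd); split; try by congr T; ring.
by apply: etrans (adm_T1 adm); congr T; ring.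
Qed.

(* T is nonnegative on the nonnegative product values, as it is increasing
   on them and fixes 0. *)
Lemma perturbed_ge0 (x : R) : x \in bern_values p -> 0 <= x -> 0 <= T x.
Proof. by move=> xV x_ge0; rewrite -(adm_T0 adm) (admissible_le adm (mem_head _ _) xV). Qed.

Lemma perturbed_product_d01 :
  d01 (fun t : (size (fvs indep)).-tuple bool => T (pair_product (bern p) t)).
Proof.
have [_ _ sum1] := perturbed_product_sums.
split => [t|].
  apply: perturbed_ge0 (bern_product_values p t) _.
  have p01 : 0 <= p <= 1 by rewrite !ltW.
  by have [nonneg _] := bern_product_d01 p01; apply: nonneg.
by rewrite (sum_pairs size_fvs_indep (fun t => T (pair_product (bern p) t))).
Qed.

(* If the transformed product still makes x0 and x1 independent and T fixes
   p * p, then T fixes p: independence forces T p ^ 2 = T (p * p). *)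
Lemma perturbed_product_indep (rels : nat -> seq bool -> bool) :
  T (p * p) = p * p ->
  struc_fo rels indep (fun t => T (pair_product (bern p) t)) -> T p = p.
Proof.
have Tp_ge0 : 0 <= T p.
  have [<- _ _] := perturbed_product_sums.
  by apply: addr_ge0; apply: perturbed_ge0; rewrite ?inE ?eqxx ?orbT //; apply: mulr_ge0; rewrite ?subr_ge0 ltW.
move=> Tpp /(@indep_equation rels [set v in fvs indep] (fun t => T (pair_product (bern p) t))).
rewrite /pair_product /bern /=.
have [-> -> ->] := perturbed_product_sums; rewrite mulr1 Tpp => Tp2.
by apply/eqP; move/eqP: Tp2; rewrite -!expr2 eqrXn2 // ltW.
Qed.
End PerturbedProduct.

(* An admissible perturbation moving an irrational v: T x = x + e * lam x,
   where lam is a Q-linear functional vanishing on Q with lam v = 1 and e > 0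
   is small enough to keep T increasing on L. *)
Lemma irrational_perturbation (v : R) (L : seq R) : (forall q, v <> ratr q) ->
  exists T G e, [/\ 0 < e, admissible T G L, forall q, T (ratr q) = ratr q
                  & forall q, T (ratr q * v) = ratr q * (v + e)].
Proof.
move=> v_irr.
have [S [lam [ql lam1 Sv lamv SL]]] := irrational_functional L v_irr.
have [e e_gt0 mono] := small_perturbation lam L.
have lamQ q : lam (ratr q) = 0 by rewrite -[ratr q]mulr1 (qlinZ ql _ (qsub1 ql)) lam1 mulr0.
exists (fun x => x + e * lam x), S, e; split => //.
- split => //.
  + exact: qsub0 ql.
  + exact: qsub1 ql.
  + exact: qsubD ql.
  + by move=> x y Sx Sy; rewrite (qlinD ql Sx Sy); ring.
  + by rewrite lam1 mulr0 addr0.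
- by move=> q; rewrite lamQ mulr0 addr0.
- by move=> q; rewrite (qlinZ ql _ Sv) lamv; ring.
Qed.

(* The parameter sqrt 2 / 2: an irrational probability with rational square. *)
Definition half_sqrt2 : R := ratr (2^-1 : rat) * Num.sqrt 2.

Lemma ratr_half : ratr (2^-1 : rat) = 2^-1 :> R.
Proof. by rewrite fmorphV /= -[2%R]/(2%:R) rmorph_nat. Qed.

Lemma sqrt2_sq : Num.sqrt 2 * Num.sqrt 2 = 2 :> R.
Proof. by rewrite -expr2 sqr_sqrtr ?ler0n. Qed.

Lemma half_sqrt2_sq : half_sqrt2 * half_sqrt2 = ratr (2^-1 : rat).
Proof. by rewrite /half_sqrt2 mulrACA sqrt2_sq ratr_half; field. Qed.

Lemma half_sqrt2_bounds : 0 < half_sqrt2 < 1.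
Proof.
have sq2 := sqrt2_sq.
have sq2_gt0 : 0 < Num.sqrt 2 :> R by rewrite sqrtr_gt0 ltr0n.
rewrite /half_sqrt2 ratr_half; apply/andP; split; nra.
Qed.

Theorem mainTheorem18 :
  exists (tau : vocab) (N : nat) (phi : foi N),
    wf_fo tau phi /\
    forall psi : eso,
      wf_eso tau (size (fvs phi)) psi -> ESO_le_plus_01 psi ->
      ~ (forall (A : finType) (rels : nat -> seq A -> bool)
                (fA : (size (fvs phi)).-tuple A -> R),
           (1 < #|A|)%N -> d01 fA ->
           (struc_fo rels phi fA <-> struc_eso rels fA psi)).
Proof.
exists [::], 2%N, indep; split => // psi wf frag H.
pose p := half_sqrt2; have /andP[p_gt0 p_lt1] := half_sqrt2_bounds.
pose rels (_ : nat) (_ : seq bool) := false.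
have card_bool2 : (1 < #|{: bool}|)%N by rewrite card_bool.
have p01 : 0 <= p <= 1 by rewrite !ltW.
pose fA (t : (size (fvs indep)).-tuple bool) := pair_product (bern p) t.
have sat : struc_eso rels fA psi.
  exact: (H _ rels _ card_bool2 (bern_product_d01 p01)).1 (product_indep _ _ _).
have [L HL] := struc_eso_transport frag wf sat.
have [T [G [e [e_gt0 adm TQ Tv]]]] :=
  irrational_perturbation (L ++ bern_values p) (@sqrt2_irrational _).
have [subL subV] := subset_cat L (bern_values p).
have admV := admissible_sub adm subV.
have Tfo : struc_fo rels indep (fun t => T (fA t)).
  apply: (H _ rels _ card_bool2 (perturbed_product_d01 p_gt0 p_lt1 admV)).2.
  exact: HL T G (admissible_sub adm subL).
have Tpp : T (p * p) = p * p by rewrite half_sqrt2_sq TQ.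
have := perturbed_product_indep p_gt0 p_lt1 admV Tpp Tfo.
rewrite /p /half_sqrt2 Tv ratr_half; lra.
Qed.
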